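(* Let $\mathfrak B\in K_{\overline\alpha}$. Then there is a substructure $\mathfrak Z\subseteq\mathfrak B$ with $\delta(\mathfrak Z)=0$ such that every substructure $\mathfrak C\subseteq\mathfrak B$ with $\delta(\mathfrak C)=0$ satisfies $\mathfrak C\subseteq\mathfrak Z$.
   Context: Fix a finite relational language $L$ in which every relation symbol has arity at least $2$. $K_L$ is the class of all finite $L$-structures (including the empty one) in which every relation symbol is interpreted symmetrically and irreflexively. Fix $\overline\alpha:L\to(0,1]$, writing $\overline\alpha_E=\overline\alpha(E)$, such that it is not the case that all symbols of $L$ are binary and $\overline\alpha_E=1$ for all $E$. For $\mathfrak A\in K_L$ let $N_E(\mathfrak A)$ be the number of subsets of $A$ on which $E$ holds and $\delta(\mathfrak A)=|A|-\sum_{E}\overline\alpha_E N_E(\mathfrak A)$ (so $\delta(\emptyset)=0$). $K_{\overline\alpha}=\{\mathfrak A\in K_L:\delta(\mathfrak A')\ge0\text{ for all substructures }\mathfrak A'\subseteq\mathfrak A\}$. *)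

From mathcomp Require Import all_boot all_order all_algebra.
Set Implicit Arguments. Unset Strict Implicit. Unset Printing Implicit Defensive.
Import Order.TTheory GRing.Theory Num.Theory.
Local Open Scope ring_scope.

(* An L-structure in K_L (every relation symmetric and
   irreflexive) with finite universe [B] is given by, for each symbol E,
   the set [rel E] of subsets of B on which E holds; each such subset has
   exactly [ar E] elements. Substructures are the induced substructures on
   subsets [A : {set B}] (the empty one included). *)

Definition wf_structure (L B : finType) (ar : L -> nat)
    (rel : L -> {set {set B}}) : Prop :=
  forall E e, e \in rel E -> #|e| = ar E.

Definition NE (L B : finType) (rel : L -> {set {set B}}) (E : L)
    (A : {set B}) : nat :=
  #|[set e in rel E | e \subset A]|.

Definition delta (R : realFieldType) (L B : finType) (alpha : L -> R)
    (rel : L -> {set {set B}}) (A : {set B}) : R :=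
  (#|A|%:R - \sum_(E : L) alpha E * (NE rel E A)%:R)%R.

Definition in_Kalpha (R : realFieldType) (L B : finType) (alpha : L -> R)
    (rel : L -> {set {set B}}) : Prop :=
  forall A : {set B}, 0 <= delta alpha rel A.

(* delta is submodular, because |.| is modular and each N_E is supermodular.
   In K_alpha delta is nonnegative, so if delta X = delta Y = 0 then
   delta (X :|: Y) <= delta X + delta Y - delta (X :&: Y) <= 0, i.e. the sets
   of zero delta are closed under union; their union is the required Z. *)

From mathcomp Require Import all_boot all_order all_algebra.
Import Order.TTheory GRing.Theory Num.Theory.
Local Open Scope ring_scope.

Lemma NE_supermodular (L B : finType) (rel : L -> {set {set B}}) (E : L)
    (X Y : {set B}) :
  (NE rel E X + NE rel E Y <= NE rel E (X :|: Y) + NE rel E (X :&: Y))%N.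
Proof.
rewrite /NE -cardsUI leq_add //; apply/subset_leq_card/subsetP => e; rewrite !inE.
- by case/orP=> /andP[-> sub] /=; apply: subset_trans sub _;
     [exact: subsetUl | exact: subsetUr].
- by case/andP=> /andP[-> subX] /andP[_ subY]; rewrite subsetI subX subY.
Qed.

Section Delta.

Variables (R : realFieldType) (L B : finType) (alpha : L -> R).
Variable rel : L -> {set {set B}}.
Hypothesis alpha_ge0 : forall E, 0 <= alpha E.

Lemma delta_submodular (X Y : {set B}) :
  delta alpha rel (X :|: Y) + delta alpha rel (X :&: Y) <=
  delta alpha rel X + delta alpha rel Y.
Proof.
rewrite /delta addrACA [X in _ <= X]addrACA -!opprD -!natrD cardsUI lerB //.
rewrite -!big_split /= ler_sum // => E _; rewrite -!mulrDr ler_wpM2l //.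
by rewrite -!natrD ler_nat NE_supermodular.
Qed.

Lemma delta_set0_le0 : delta alpha rel set0 <= 0.
Proof.
by rewrite /delta cards0 sub0r oppr_le0 sumr_ge0 // => E _; rewrite mulr_ge0.
Qed.

Hypothesis HK : in_Kalpha alpha rel.

Lemma delta_set0 : delta alpha rel set0 = 0.
Proof. by apply/eqP; rewrite eq_le delta_set0_le0 HK. Qed.

Lemma delta_setU_eq0 (X Y : {set B}) :
  delta alpha rel X = 0 -> delta alpha rel Y = 0 ->
  delta alpha rel (X :|: Y) = 0.
Proof.
move=> dX0 dY0; apply/eqP; rewrite eq_le HK andbT.
have := delta_submodular X Y; rewrite dX0 dY0 addr0.
by apply: le_trans; rewrite lerDl HK.
Qed.

Lemma delta_bigcup_eq0 (P : pred {set B}) :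
  (forall C, P C -> delta alpha rel C = 0) ->
  delta alpha rel (\bigcup_(C | P C) C) = 0.
Proof.
move=> dP0; elim/big_rec: _ => [|C X PC dX0]; first exact: delta_set0.
by apply: delta_setU_eq0 => //; apply: dP0.
Qed.

End Delta.

Theorem proposition3p36 (R : realFieldType) (L : finType) (ar : L -> nat)
  (alpha : L -> R)
  (Har : forall E, (2 <= ar E)%N)
  (Halpha : forall E, 0 < alpha E <= 1)
  (Hnot : ~ (forall E, ar E = 2%N /\ alpha E = 1))
  (B : finType) (rel : L -> {set {set B}})
  (Hwf : wf_structure ar rel)
  (HK : in_Kalpha alpha rel) :
  exists Z : {set B},
    delta alpha rel Z = 0 /\
    forall C : {set B}, delta alpha rel C = 0 -> C \subset Z.
Proof.
have alpha_ge0 E : 0 <= alpha E by case/andP: (Halpha E) => /ltW.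
exists (\bigcup_(C | delta alpha rel C == 0) C); split.
- by apply: delta_bigcup_eq0 => // C /eqP.
- by move=> C dC0; apply: bigcup_sup; apply/eqP.
Qed.
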